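(* Let $y_0\approx1.35542$ be the second smallest real root of the polynomial $2y^3-9y^2+10y-2$ (its unique root in the interval $(1,2)$). Algorithm SIDLE with parameter $y=y_0$ is $\rho$-competitive for $1\mid t_j=1\mid\sum C_j$ with obligatory tests, regardless of the order in which it tests the jobs, where \[ \rho=\tfrac12\left(1-y_0+y_0^2+\sqrt{9-2y_0-y_0^2-2y_0^3+y_0^4}\right)\approx1.58451\le1.585. \]
   Context: Scheduling with obligatory tests and uniform test times: $n$ jobs on a single machine, each with test time $t_j=1$ and an unknown processing time $p_j\ge0$ revealed only when the test of $j$ completes. The test of a job must be executed before its processing part (which can be executed any time afterwards); operations are non-preemptive, one at a time. $C_j$ is the completion time of the processing part of $j$; objective $\sum_jC_j$. An algorithm is $\rho$-competitive if $\mathit{ALG}\le\rho\cdot\mathit{OPT}$ on every instance, where $\mathit{OPT}$ is the offline optimum (tests also obligatory). Algorithm SIDLE with parameter $y>0$: test the jobs one after another without idle time (in some order). When the test of job $j$ completes and reveals $p_j\le y$ (a short job), execute the processing part of $j$ immediately after its test, before the next test. If $p_j>y$ (a long job), defer its processing part. After all jobs have been tested and all short jobs executed, execute the processing parts of the long jobs in non-decreasing order of $p_j$. *)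

From mathcomp Require Import all_boot all_order all_algebra all_fingroup.
Set Implicit Arguments. Unset Strict Implicit. Unset Printing Implicit Defensive.
Import Order.TTheory GRing.Theory Num.Theory.
Local Open Scope ring_scope.

Section Sched.
Variable R : rcfType.

(* Phase 1: test the jobs in the given order (list of processing times in
   testing order), starting at time [t]; a short job (p <= y) is processed
   right after its test. *)
Fixpoint sidle_phase1 (y t : R) (s : seq R) : R * R :=
  match s with
  | [::] => (t, 0)
  | p :: s' =>
      if p <= y then
        let r := sidle_phase1 y (t + 1 + p) s' in (r.1, r.2 + (t + 1 + p))
      else sidle_phase1 y (t + 1) s'
  end.

Fixpoint seq_completion (t : R) (s : seq R) : R :=
  match s with
  | [::] => 0
  | p :: s' => (t + p) + seq_completion (t + p) s'
  end.

Definition sidle_cost (y : R) (s : seq R) : R :=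
  let r := sidle_phase1 y 0 s in
  r.2 + seq_completion r.1 (sort <=%R [seq p <- s | y < p]).

(* A (non-preemptive, single-machine) schedule gives start times [ts j] of
   the test (length 1) and [ps j] of the processing part (length p j). *)
Definition feasible_schedule n (p : 'I_n -> R) (ts ps : 'I_n -> R) : Prop :=
  [/\ (forall j, 0 <= ts j),
      (forall j, ts j + 1 <= ps j),
      (forall i j, i != j -> ts i + 1 <= ts j \/ ts j + 1 <= ts i),
      (forall i j, i != j -> ps i + p i <= ps j \/ ps j + p j <= ps i)
    & (forall i j, ts i + 1 <= ps j \/ ps j + p j <= ts i)].

Definition schedule_cost n (p : 'I_n -> R) (ps : 'I_n -> R) : R :=
  \sum_(j < n) (ps j + p j).

Definition test_order n (p : 'I_n -> R) (sigma : {perm 'I_n}) : seq R :=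
  [seq p (sigma k) | k <- enum 'I_n].

End Sched.

From mathcomp Require Import all_boot all_order all_algebra all_fingroup.
From mathcomp Require Import ring lra.
Import Order.TTheory GRing.Theory Num.Theory.
Local Open Scope ring_scope.
Set Implicit Arguments. Unset Strict Implicit.

(* Whatever the testing order, SIDLE's cost is at most the sum of [1 + p_j] over
   the jobs plus, over the pairs of jobs, the largest delay two jobs can cause
   each other; this bound depends only on the lengths and on which jobs are
   short.  Every feasible schedule costs at least the sum of [1 + p_j] plus
   [1 + min(p_i, p_j)] per pair, because the job of a subset that completes last
   waits for all tests and processing parts of the subset.  The difference
   [rho * lower - upper], seen as a function of the length of one job, is
   concave for a short job and nondecreasing for a long one, so it is smallest
   when short jobs have length [0] or [y] and long ones length [y].  There it is
   a quadratic form in the numbers of jobs of the three kinds, nonnegative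
   because [rho] is the larger root of [rho^2 - (1 - y + y^2) rho + y^2 - 2]
   and [1.355 <= y <= 1.356]. *)

Section Pairs.
Variables (R : numFieldType) (T : eqType).
Implicit Types (f : T -> T -> R) (s : seq T).

Fixpoint pairs f s : R :=
  if s is x :: s' then \sum_(z <- s') f x z + pairs f s' else 0.

Lemma pairsE f s : (forall a b, f a b = f b a) ->
  pairs f s = (\sum_(a <- s) \sum_(b <- s) f a b - \sum_(a <- s) f a a) / 2.
Proof.
move=> fC; elim: s => [|x s IH] /=; first by rewrite !big_nil; field.
have -> : \sum_(a <- x :: s) \sum_(b <- x :: s) f a b =
    f x x + \sum_(z <- s) f x z + (\sum_(a <- s) f x a + \sum_(a <- s) \sum_(b <- s) f a b).
  rewrite !big_cons; congr (_ + _).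
  by rewrite -big_split; apply: eq_bigr => a _; rewrite big_cons fC.
by rewrite IH big_cons; field.
Qed.

Lemma perm_pairs f s1 s2 : (forall a b, f a b = f b a) ->
  perm_eq s1 s2 -> pairs f s1 = pairs f s2.
Proof.
move=> fC eq12; rewrite !pairsE // (perm_big _ eq12) (perm_big s2 eq12).
by congr ((_ - _) / 2); apply: eq_bigr => a _; apply: perm_big.
Qed.

End Pairs.

Lemma sumr_const_seq (R : pzSemiRingType) (T : Type) (s : seq T) (c : R) :
  \sum_(z <- s) c = (size s)%:R * c.
Proof. by rewrite big_const_seq count_predT iter_addr_0 mulr_natl. Qed.

Section SidleUpperBound.
Variables (R : rcfType) (y : R).
Implicit Types (s : seq R).

Definition short_part x : R := if x <= y then x else 0.
Definition phase1_length s := \sum_(z <- s) (1 + short_part z).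
Definition longs s := [seq p <- s | y < p].

Lemma phase1_length_cons x s :
  phase1_length (x :: s) = 1 + short_part x + phase1_length s.
Proof. by rewrite /phase1_length big_cons. Qed.

Lemma sidle_phase1E s t :
  (sidle_phase1 y t s).1 = t + phase1_length s /\
  (sidle_phase1 y t s).2 = (count (<= y) s)%:R * t + (sidle_phase1 y 0 s).2.
Proof.
elim: s t => [|x s IH] t /=; first by rewrite /phase1_length big_nil mul0r add0r addr0.
rewrite phase1_length_cons /short_part; case: ifP => /= xy.
- have [-> ->] := IH (t + 1 + x); have [_ ->] := IH (0 + 1 + x).
  by split; rewrite -?natr1; ring.
- have [-> ->] := IH (t + 1); have [_ ->] := IH (0 + 1).
  by split; ring.
Qed.

Lemma seq_completion_shift t s :
  seq_completion t s = (size s)%:R * t + seq_completion 0 s.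
Proof.
elim: s t => [|x s IH] t /=; first by rewrite mul0r addr0.
by rewrite IH (IH (0 + x)) -natr1; ring.
Qed.

Lemma seq_completion_sorted s : sorted <=%R s ->
  seq_completion 0 s = \sum_(z <- s) z + pairs Num.min s.
Proof.
elim: s => [|x s IH] /=; first by rewrite big_nil addr0.
move=> xs; have [sorted_s x_le] := (path_sorted xs, order_path_min le_trans xs).
have -> : \sum_(z <- s) Num.min x z = (size s)%:R * x.
  rewrite -sumr_const_seq big_seq [RHS]big_seq.
  by apply: eq_bigr => z /(allP x_le) xz; rewrite (min_idPl xz).
by rewrite seq_completion_shift IH // big_cons; ring.
Qed.

Lemma sidle_costE s : sidle_cost y s =
  (sidle_phase1 y 0 s).2 + (size (longs s))%:R * phase1_length s
  + \sum_(l <- longs s) l + pairs Num.min (longs s).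
Proof.
rewrite /sidle_cost /=; have [-> _] := sidle_phase1E s 0.
rewrite add0r seq_completion_shift.
rewrite seq_completion_sorted; last exact: (sort_sorted le_total).
have perm_sort_longs := permEl (perm_sort <=%R (longs s)).
rewrite size_sort (perm_big _ perm_sort_longs).
by rewrite (perm_pairs minC perm_sort_longs) !addrA.
Qed.

Lemma count_short_longs s :
  (count (<= y) s)%:R + (size (longs s))%:R = (size s)%:R :> R.
Proof.
rewrite -natrD size_filter -(count_predC (<= y) s); congr (_ + _)%:R.
by apply: eq_count => z /=; rewrite ltNge.
Qed.

(* A tagged job is a pair [(p, long)].  [ub_pair a b] bounds the delay that two
   jobs cause to each other's completion under SIDLE, whichever is tested
   first. *)
Definition ub_pair (a b : R * bool) : R :=
  match a.2, b.2 with
  | false, false => 1 + Num.max a.1 b.1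
  | true, false => 2 + b.1
  | false, true => 2 + a.1
  | true, true => 2 + Num.min a.1 b.1
  end.

Lemma ub_pairC a b : ub_pair a b = ub_pair b a.
Proof. by case: a b => [a [|]] [b [|]]; rewrite /ub_pair /= ?(minC a) ?(maxC a). Qed.

Definition ub_cost (t : seq (R * bool)) := \sum_(z <- t) (1 + z.1) + pairs ub_pair t.
Definition tag_long s := [seq (v, y < v) | v <- s].

Lemma sidle_cost_cons_short x s : x <= y ->
  sidle_cost y (x :: s) = sidle_cost y s + (1 + x) * (size s).+1%:R.
Proof.
move=> xy; rewrite !sidle_costE /= xy /longs /= ltNge xy /= -/(longs s).
have [_ ->] := sidle_phase1E s (0 + 1 + x).
rewrite phase1_length_cons /short_part xy.
rewrite -natr1 -(count_short_longs s); ring.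
Qed.

Lemma sum_ub_pair_long x s :
  \sum_(z <- tag_long s) ub_pair (x, true) z =
  (size s)%:R + phase1_length s + \sum_(l <- longs s) Num.min x l.
Proof.
rewrite /tag_long big_map /longs big_filter [X in _ + X]big_mkcond.
rewrite -[(size s)%:R]mulr1 -sumr_const_seq -!big_split /=.
by apply: eq_bigr => z _; rewrite /ub_pair /short_part /=; case: leP => _; ring.
Qed.

Lemma sidle_cost_cons_long x s : y < x ->
  sidle_cost y (x :: s) =
  sidle_cost y s + (1 + x) + \sum_(z <- tag_long s) ub_pair (x, true) z.
Proof.
move=> yx; rewrite sum_ub_pair_long !sidle_costE /= (leNgt x) yx /= -/(longs s).
have [_ ->] := sidle_phase1E s (0 + 1).
rewrite phase1_length_cons /short_part (leNgt x) yx big_cons /=.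
rewrite -natr1 -(count_short_longs s); ring.
Qed.

Lemma sidle_cost_le_ub s : sidle_cost y s <= ub_cost (tag_long s).
Proof.
elim: s => [|x s IH]; first by rewrite /ub_cost /sidle_cost /= big_nil addr0.
rewrite /ub_cost /= big_cons -/(tag_long s) /=.
case: (leP x y) => [xy|yx].
- have charge_ge : (1 + x) * (size s)%:R <= \sum_(z <- tag_long s) ub_pair (x, false) z.
    rewrite mulrC -sumr_const_seq /tag_long big_map; apply: ler_sum => z _.
    rewrite /ub_pair /=; case: (y < z); first lra.
    by rewrite lerD2l le_max lexx.
  rewrite sidle_cost_cons_short // -natr1.
  move: IH charge_ge; rewrite /ub_cost; lra.
- rewrite sidle_cost_cons_long //; move: IH; rewrite /ub_cost; lra.
Qed.

End SidleUpperBound.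

Section Gap.
Variables (R : rcfType) (y rho : R).
Implicit Types (a b z : R * bool) (t : seq (R * bool)).

Definition lb_pair a b : R := 1 + Num.min a.1 b.1.
Definition lb_cost t := \sum_(z <- t) (1 + z.1) + pairs lb_pair t.
Definition gap t := rho * lb_cost t - ub_cost t.
Definition gap_pair a b := rho * lb_pair a b - ub_pair a b.
Definition gap_step a t := (rho - 1) * (1 + a.1) + \sum_(z <- t) gap_pair a z.

Lemma lb_pairC a b : lb_pair a b = lb_pair b a.
Proof. by rewrite /lb_pair minC. Qed.

Lemma gap_cons a t : gap (a :: t) = gap t + gap_step a t.
Proof.
rewrite /gap /gap_step /lb_cost /ub_cost /= !big_cons /gap_pair sumrB -mulr_sumr; ring.
Qed.

Lemma perm_gap t1 t2 : perm_eq t1 t2 -> gap t1 = gap t2.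
Proof.
move=> eq12; rewrite /gap /lb_cost /ub_cost !(perm_big _ eq12).
by rewrite (perm_pairs lb_pairC eq12) (perm_pairs (@ub_pairC R) eq12).
Qed.

Definition admissible z := (0 <= z.1) && (if z.2 then y <= z.1 else z.1 <= y).
Definition extreme z := if z.2 then z.1 == y else (z.1 == 0) || (z.1 == y).

Lemma extreme_admissible z : 0 <= y -> extreme z -> admissible z.
Proof.
case: z => p [] /= y_ge0; rewrite /extreme /admissible /=.
  by move=> /eqP ->; rewrite lexx y_ge0.
by case/orP => /eqP ->; rewrite lexx y_ge0.
Qed.

Lemma gap_pair_short_concave (v : R) z : 0 <= rho -> 0 <= v <= y -> admissible z ->
  (y - v) * gap_pair (0, false) z + v * gap_pair (y, false) z
  <= y * gap_pair (v, false) z.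
Proof.
case: z => w [] rho_ge0 /andP [v_ge0 v_le_y] /andP [/= w_ge0 w_y].
  rewrite /gap_pair /lb_pair /ub_pair /= !minEle.
  by rewrite (le_trans v_le_y w_y) (le_trans (le_trans v_ge0 v_le_y) w_y) w_y ?lexx; lra.
rewrite /gap_pair /lb_pair /ub_pair /= !minEle !maxEle w_ge0.
have : 0 <= v * (1 + rho) * (y - w) by rewrite !mulr_ge0 ?subr_ge0 ?addr_ge0.
have : 0 <= (y - v) * (1 + rho) * w by rewrite !mulr_ge0 ?subr_ge0 ?addr_ge0.
by case: (leP y w) => ?; case: (leP v w) => ? ? ?; lra.
Qed.

Lemma gap_pair_long_mono (v : R) z : 1 <= rho -> y <= v -> admissible z ->
  gap_pair (y, true) z <= gap_pair (v, true) z.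
Proof.
case: z => w [] rho_ge1 y_le_v /andP [/= w_ge0 w_y].
all: rewrite /gap_pair /lb_pair /ub_pair /= !minEle.
all: case: (leP y w) => ?; case: (leP v w) => ?; nra.
Qed.

Lemma gap_step_short_concave (v : R) t : 0 <= rho -> 0 <= v <= y -> all admissible t ->
  (y - v) * gap_step (0, false) t + v * gap_step (y, false) t
  <= y * gap_step (v, false) t.
Proof.
move=> rho_ge0 v_range /allP adm_t; rewrite /gap_step /= !mulrDr !mulr_sumr.
rewrite addrACA -big_split /= big_seq [X in _ <= _ + X]big_seq lerD //.
  by rewrite le_eqVlt; apply/orP; left; apply/eqP; ring.
by apply: ler_sum => z /adm_t; apply: gap_pair_short_concave.
Qed.

Lemma gap_step_long_mono (v : R) t : 1 <= rho -> y <= v -> all admissible t ->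
  gap_step (y, true) t <= gap_step (v, true) t.
Proof.
move=> rho_ge1 y_le_v /allP adm_t; rewrite /gap_step /=; apply: lerD.
  by rewrite ler_wpM2l ?subr_ge0 // lerD2l.
rewrite big_seq [X in _ <= X]big_seq.
by apply: ler_sum => z /adm_t; apply: gap_pair_long_mono.
Qed.

(* Replace the jobs one by one by extreme ones: a long job by one of length [y]
   (monotonicity), a short one by one of length [0] or [y] (concavity). *)
Lemma gap_ge0_of_extreme : 0 < y -> 1 <= rho ->
  (forall r, all extreme r -> 0 <= gap r) -> forall t, all admissible t -> 0 <= gap t.
Proof.
move=> y_gt0 rho_ge1 gap_extreme_ge0 t adm_t.
suff gap_cat_ge0 s r : all extreme r -> all admissible s -> 0 <= gap (r ++ s).
  exact: (gap_cat_ge0 t [::]).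
elim: s r => [|x s IH] r ext_r; first by rewrite cats0 => _; apply: gap_extreme_ge0.
rewrite /= => /andP [adm_x adm_s].
have rotate c : gap (r ++ c :: s) = gap (r ++ s) + gap_step c (r ++ s).
  by rewrite -gap_cons; apply: perm_gap; rewrite (perm_catCA r [:: c] s).
have step_ge c : extreme c -> 0 <= gap (r ++ s) + gap_step c (r ++ s).
  move=> ext_c; rewrite -rotate -cat_rcons; apply: IH => //.
  by rewrite -cats1 all_cat ext_r /= ext_c.
have adm_rs : all admissible (r ++ s).
  rewrite all_cat adm_s andbT; apply/allP => z /(allP ext_r).
  exact/extreme_admissible/ltW.
rewrite rotate; case: x adm_x => v [] /andP [/= v_ge0 v_y].
  have := gap_step_long_mono rho_ge1 v_y adm_rs.
  have := step_ge (y, true) (eqxx y); lra.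
have ext0 : extreme (0, false) by rewrite /extreme eqxx.
have exty : extreme (y, false) by rewrite /extreme eqxx orbT.
have v_range : 0 <= v <= y by rewrite v_ge0 v_y.
have concave := gap_step_short_concave (le_trans ler01 rho_ge1) v_range adm_rs.
have step0 : 0 <= (y - v) * (gap (r ++ s) + gap_step (0, false) (r ++ s)).
  by rewrite mulr_ge0 ?subr_ge0 ?step_ge.
have stepy : 0 <= v * (gap (r ++ s) + gap_step (y, false) (r ++ s)).
  by rewrite mulr_ge0 ?step_ge.
rewrite -(pmulr_rge0 _ y_gt0); lra.
Qed.

Lemma admissible_tag_long (s : seq R) :
  all (>= 0) s -> all admissible (tag_long y s).
Proof.
move=> /allP s_ge0; apply/allP => _ /mapP [v v_s ->].
by rewrite /admissible /= s_ge0 //=; case: ltP => // /ltW.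
Qed.

End Gap.

Section ExtremeGap.
Variables (R : rcfType) (y rho : R).
Implicit Types (r : seq (R * bool)).

Definition count_short0 r := (count (fun z => ~~ z.2 && (z.1 == 0)) r)%:R : R.
Definition count_shorty r := (count (fun z => ~~ z.2 && (z.1 != 0)) r)%:R : R.
Definition count_long r := (count snd r)%:R : R.

Lemma sum_extreme (F : R * bool -> R) r : y != 0 -> all (extreme y) r ->
  \sum_(z <- r) F z =
  count_short0 r * F (0, false) + count_shorty r * F (y, false) + count_long r * F (y, true).
Proof.
move=> y_neq0; elim: r => [|[w b] r IH] /=.
  by rewrite big_nil /count_short0 /count_shorty /count_long !mul0r !addr0.
case/andP=> ext_wb ext_r; rewrite big_cons IH // /count_short0 /count_shorty /count_long /=.
move: ext_wb; rewrite /extreme /=; case: b => /=.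
  by move=> /eqP ->; rewrite -natr1; ring.
by case/orP => /eqP ->; rewrite ?eqxx ?(negbTE y_neq0) /= -!natr1; ring.
Qed.

Definition binom2 (m : R) := m * (m - 1) / 2.

(* [gap] on [a] short jobs of length 0, [b] short jobs of length [y] and [c]
   long jobs of length [y]. *)
Definition extreme_gap (a b c : R) :=
  (rho - 1) * (a + b + c + y * (b + c))
  + rho * (binom2 (a + b + c) + y * binom2 (b + c))
  - (binom2 (a + b) * (1 + y) - y * binom2 a
     + 2 * c * (a + b) + y * c * b
     + (2 + y) * binom2 c).

Lemma gap_extreme r : 0 < y -> all (extreme y) r ->
  gap rho r = extreme_gap (count_short0 r) (count_shorty r) (count_long r).
Proof.
move=> y_gt0; have y_neq0 : y != 0 by rewrite gt_eqF.
have y_ge0 : 0 <= y by apply: ltW.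
have y_le0F : (y <= 0) = false by rewrite leNgt y_gt0.
elim: r => [|[w b] r IH] /=.
  rewrite /gap /lb_cost /ub_cost /extreme_gap /count_short0 /count_shorty /count_long.
  by rewrite /binom2 /= big_nil => _; field.
case/andP=> ext_wb ext_r; rewrite gap_cons IH // /gap_step (sum_extreme _ y_neq0 ext_r).
rewrite /count_short0 /count_shorty /count_long /=.
rewrite /gap_pair /lb_pair /ub_pair /extreme_gap /binom2 /= !minEle !maxEle.
move: ext_wb; rewrite /extreme /=; case: b => /=.
  by move=> /eqP ->; rewrite ?lexx ?y_le0F ?y_ge0 -!natr1; field.
by case/orP => /eqP ->; rewrite ?eqxx ?(negbTE y_neq0) ?lexx ?y_le0F ?y_ge0 /= -!natr1; field.
Qed.

(* Twice [extreme_gap] is a quadratic form [Q] in [(a, b, c)] plus a linear form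
   with nonnegative coefficients. Multiplied by [(rho - 1) * d2], where [d2] is
   the positive quantity of the third hypothesis, [Q] is a sum of two squares
   plus a multiple of [c ^+ 2] that vanishes because [rho] is a root of
   [rho ^+ 2 - (1 - y + y ^+ 2) * rho + y ^+ 2 - 2]. *)
Lemma extreme_gap_ge0 (a b c : R) : 0 <= y -> 1 < rho ->
  rho ^+ 2 - (1 - y + y ^+ 2) * rho + y ^+ 2 - 2 = 0 ->
  0 < (rho - 1) ^+ 2 * (1 + y) - (rho - 1 - y) ^+ 2 ->
  0 <= rho * (1 + y) - y ->
  0 <= a -> 0 <= b -> 0 <= c -> 0 <= extreme_gap a b c.
Proof.
move=> y_ge0 rho_gt1 rho_root d2_gt0 lin_c a_ge0 b_ge0 c_ge0.
set d2 := _ - _ in d2_gt0.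
pose Q := (rho - 1) * a ^+ 2 + (rho - 1) * (1 + y) * b ^+ 2
  + (rho * (1 + y) - 2 - y) * c ^+ 2 + 2 * (rho - 1 - y) * a * b
  + 2 * (rho - 2) * a * c + 2 * (rho * (1 + y) - 2 - y) * b * c.
have gapE : 2 * extreme_gap a b c =
    Q + (rho - 1) * a + (rho - 1) * (1 + y) * b + (rho * (1 + y) - y) * c.
  by rewrite /extreme_gap /binom2 /Q; field.
pose e := (rho - 1) * (rho * (1 + y) - 2 - y) - (rho - 1 - y) * (rho - 2).
have sos : (rho - 1) * d2 * Q =
    d2 * ((rho - 1) * a + (rho - 1 - y) * b + (rho - 2) * c) ^+ 2
    + (d2 * b + e * c) ^+ 2
    + (rho - 1) * y * (rho ^+ 2 - (1 - y + y ^+ 2) * rho + y ^+ 2 - 2) * c ^+ 2.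
  by rewrite /Q /d2 /e; ring.
rewrite rho_root mulr0 mul0r addr0 in sos.
have Q_ge0 : 0 <= Q.
  have lead_gt0 : 0 < (rho - 1) * d2 by rewrite mulr_gt0 // subr_gt0.
  rewrite -(pmulr_rge0 _ lead_gt0) sos.
  by rewrite addr_ge0 ?sqr_ge0 // mulr_ge0 ?sqr_ge0 // ltW.
have : 0 <= (rho - 1) * (1 + y) by apply: mulr_ge0; lra.
nra.
Qed.

End ExtremeGap.

Section Constants.
Variable R : rcfType.

Lemma root_bounds (y : R) : 1 < y < 2 ->
  2 * y ^+ 3 - 9 * y ^+ 2 + 10 * y - 2 = 0 -> 1355 / 1000 <= y <= 1356 / 1000.
Proof.
case/andP=> y_gt1 y_lt2 root_y; apply/andP; split.
- rewrite leNgt; apply/negP => y_lt.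
  have : 0 <= (y - 1355 / 1000) ^+ 2 * (y - 1) by rewrite mulr_ge0 ?sqr_ge0 // subr_ge0 ltW.
  have : 0 < (1355 / 1000 - y) * (158 / 100 * y + 1) by apply: mulr_gt0; lra.
  nra.
- rewrite leNgt; apply/negP => y_gt.
  have : 0 <= (y - 1356 / 1000) ^+ 2 * (2 - y) by rewrite mulr_ge0 ?sqr_ge0 // subr_ge0 ltW.
  have : 0 < (y - 1356 / 1000) * (y + 1) by apply: mulr_gt0; lra.
  nra.
Qed.

Lemma ratio_bounds (y : R) : 1355 / 1000 <= y <= 1356 / 1000 ->
  let rho := (1 - y + y ^+ 2
              + Num.sqrt (9 - 2 * y - y ^+ 2 - 2 * y ^+ 3 + y ^+ 4)) / 2 in
  [/\ rho <= 1585%:R / 1000%:R, 158 / 100 <= rho,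
      rho ^+ 2 - (1 - y + y ^+ 2) * rho + y ^+ 2 - 2 = 0,
      0 < (rho - 1) ^+ 2 * (1 + y) - (rho - 1 - y) ^+ 2 &
      0 <= rho * (1 + y) - y].
Proof.
case/andP=> y_lo y_hi; set D := _ + y ^+ 4 => rho.
have y_mid : 0 <= (y - 1355 / 1000) * (1356 / 1000 - y) by apply: mulr_ge0; lra.
have D_ge0 : 0 <= D by rewrite /D; nra.
have sqrt_sq : Num.sqrt D ^+ 2 = D by rewrite sqr_sqrtr.
have sqrt_lo : 168 / 100 <= Num.sqrt D.
  have : (168 / 100) ^+ 2 <= D by rewrite /D; nra.
  have := sqrtr_ge0 D; nra.
have sqrt_hi : Num.sqrt D <= 317 / 100 - (1 - y + y ^+ 2).
  have : D <= (317 / 100 - (1 - y + y ^+ 2)) ^+ 2 by rewrite /D; nra.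
  have := sqrtr_ge0 D; nra.
have rho_lo : 158 / 100 <= rho by rewrite /rho; nra.
split => //.
- by rewrite /rho; lra.
- by rewrite /rho; move: sqrt_sq; rewrite /D; nra.
- nra.
- nra.
Qed.

End Constants.

Lemma sum_disjoint_intervals_pos (R : realFieldType) (I : finType) (st len : I -> R) :
  (forall x, 0 <= st x) ->
  (forall x x', x != x' -> st x + len x <= st x' \/ st x' + len x' <= st x) ->
  forall (B : {set I}) (C : R), 0 <= C ->
  (forall x, x \in B -> 0 < len x /\ st x + len x <= C) ->
  \sum_(x in B) len x <= C.
Proof.
move=> st_ge0 disj B; elim: {B}_.+1 {-2}B (ltnSn #|B|) => // m IH B.
rewrite ltnS => card_B C C_ge0 B_in.
have [->|[x0 x0_B]] := set_0Vmem B; first by rewrite big_set0.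
have [xm xm_B xm_max] := @arg_maxP _ _ I x0 (mem B) (fun x => st x + len x) x0_B.
have {}xm_B : xm \in B by [].
rewrite (big_setD1 xm) //=.
have [len_xm_gt0 end_xm] := B_in xm xm_B.
suff : \sum_(x in B :\ xm) len x <= st xm by lra.
apply: IH (st_ge0 xm) _; first by rewrite (cardsD1 xm) xm_B in card_B.
move=> x; rewrite in_setD1 => /andP [x_neq x_B]; have [len_x_gt0 _] := B_in x x_B.
split=> //; case: (disj x xm x_neq) => // xm_before_x.
by have /= := xm_max x x_B; lra.
Qed.

Lemma sum_disjoint_intervals (R : realFieldType) (I : finType) (st len : I -> R) :
  (forall x, 0 <= st x) -> (forall x, 0 <= len x) ->
  (forall x x', x != x' -> st x + len x <= st x' \/ st x' + len x' <= st x) ->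
  forall (B : {set I}) (C : R), 0 <= C ->
  (forall x, x \in B -> st x + len x <= C) ->
  \sum_(x in B) len x <= C.
Proof.
move=> st_ge0 len_ge0 disj B C C_ge0 B_end.
rewrite (big_setID [set x | 0 < len x]) /= [X in _ + X]big1 ?addr0; last first.
  by move=> x; rewrite !inE lt_def len_ge0 andbT negbK => /andP [/eqP].
apply: sum_disjoint_intervals_pos => // x.
by rewrite !inE => /andP [x_B len_x]; split; last exact: B_end.
Qed.

Section ScheduleLowerBound.
Variables (R : rcfType) (n : nat) (p ts ps : 'I_n -> R).
Hypotheses (p_ge0 : forall j, 0 <= p j) (sched : feasible_schedule p ts ps).

(* Tests and processing parts form disjoint intervals, all before the last
   completion time in [A]. *)
Lemma work_le_last_completion (A : {set 'I_n}) z : z \in A ->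
  (forall j, j \in A -> ps j + p j <= ps z + p z) ->
  \sum_(j in A) (1 + p j) <= ps z + p z.
Proof.
case: sched => ts_ge0 test_first tests_disj procs_disj test_proc_disj z_A z_last.
pose st (x : 'I_n * bool) := if x.2 then ps x.1 else ts x.1.
pose len (x : 'I_n * bool) := if x.2 then p x.1 else 1.
have -> : \sum_(j in A) (1 + p j) = \sum_(x in [set x | x.1 \in A]) len x.
  rewrite (eq_bigr (fun j => \sum_(b : bool) len (j, b))); last first.
    by move=> j _; rewrite big_bool /len /= addrC.
  by rewrite pair_big_dep /=; apply: eq_bigl => -[j b]; rewrite inE andbT.
apply: (@sum_disjoint_intervals _ _ st len).
- by move=> [j []]; rewrite /st //=; have := ts_ge0 j; have := test_first j; lra.
- by move=> [j []]; rewrite /len /= ?ler01.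
- move=> [i []] [j []] ij; rewrite /st /len /=.
  + by apply: procs_disj; apply: contraNneq ij => ->.
  + by case: (test_proc_disj j i) => ?; [right | left].
  + exact: test_proc_disj.
  + by apply: tests_disj; apply: contraNneq ij => ->.
- by have := ts_ge0 z; have := test_first z; have := p_ge0 z; lra.
- move=> [j b]; rewrite inE /= => j_A; have := z_last j j_A.
  by case: b; rewrite /st /len /=; have := test_first j; have := p_ge0 j; lra.
Qed.

Definition lb_set (A : {set 'I_n}) :=
  (\sum_(j in A) (1 + p j) + \sum_(i in A) \sum_(j in A) (1 + Num.min (p i) (p j))) / 2.

Lemma lb_setD1 (A : {set 'I_n}) z : z \in A ->
  lb_set A = lb_set (A :\ z) + (1 + p z) + \sum_(j in A :\ z) (1 + Num.min (p z) (p j)).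
Proof.
move=> z_A.
have split_z i : \sum_(j in A) (1 + Num.min (p i) (p j)) =
    1 + Num.min (p z) (p i) + \sum_(j in A :\ z) (1 + Num.min (p i) (p j)).
  by rewrite (big_setD1 z z_A) minC.
rewrite /lb_set (eq_bigr _ (fun i _ => split_z i)) !(big_setD1 z z_A) /=.
by rewrite [\sum_(i in A :\ z) (_ + _ + _)]big_split /= minxx; field.
Qed.

Lemma lb_set_le_completion (A : {set 'I_n}) : lb_set A <= \sum_(j in A) (ps j + p j).
Proof.
elim: {A}_.+1 {-2}A (ltnSn #|A|) => // m IH A; rewrite ltnS => card_A.
have [->|[x0 x0_A]] := set_0Vmem A; first by rewrite /lb_set !big_set0; lra.
have [z z_A z_last] := @arg_maxP _ _ 'I_n x0 (mem A) (fun j => ps j + p j) x0_A.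
have {}z_A : z \in A by [].
have lb_rest := IH (A :\ z) ltac:(by rewrite (cardsD1 z) z_A in card_A).
have work := work_le_last_completion z_A z_last.
have min_le : \sum_(j in A :\ z) (1 + Num.min (p z) (p j)) <= \sum_(j in A :\ z) (1 + p j).
  by apply: ler_sum => j _; rewrite lerD2l ge_min lexx orbT.
move: work; rewrite (lb_setD1 z_A) !(big_setD1 z z_A) /=; lra.
Qed.

End ScheduleLowerBound.

Lemma lb_cost_test_order (R : rcfType) (y : R) n (p : 'I_n -> R) (sigma : {perm 'I_n}) :
  lb_cost (tag_long y (test_order p sigma)) = lb_set p [set: 'I_n].
Proof.
have sum_tag (F : R * bool -> R) :
    \sum_(z <- tag_long y (test_order p sigma)) F z = \sum_(j in [set: 'I_n]) F (p j, y < p j).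
  rewrite !big_map -enumT big_enum /= [RHS](reindex_inj (@perm_inj _ sigma)) /=.
  by apply: eq_bigl => j; rewrite !inE.
rewrite /lb_cost (pairsE _ (@lb_pairC R)) /lb_set !sum_tag.
rewrite (eq_bigr _ (fun i _ => sum_tag (lb_pair (p i, y < p i)))).
rewrite [X in _ - X](eq_bigr (fun j => 1 + p j)) => [|j _]; last by rewrite /lb_pair minxx.
by rewrite /lb_pair; field.
Qed.

Lemma schedule_cost_ge_lb (R : rcfType) (y : R) n (p : 'I_n -> R) (sigma : {perm 'I_n}) ts ps :
  (forall j, 0 <= p j) -> feasible_schedule p ts ps ->
  lb_cost (tag_long y (test_order p sigma)) <= schedule_cost p ps.
Proof.
move=> p_ge0 sched; rewrite lb_cost_test_order.
by have := lb_set_le_completion p_ge0 sched [set: 'I_n]; under eq_bigl do rewrite inE.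
Qed.

Theorem theorem4 (R : rcfType) (y0 : R)
  (hy0 : 1 < y0 < 2)
  (hroot : 2 * y0 ^+ 3 - 9 * y0 ^+ 2 + 10 * y0 - 2 = 0) :
  let rho := (1 - y0 + y0 ^+ 2
              + Num.sqrt (9 - 2 * y0 - y0 ^+ 2 - 2 * y0 ^+ 3 + y0 ^+ 4)) / 2 in
  rho <= 1585%:R / 1000%:R /\
  (forall (n : nat) (p : 'I_n -> R), (forall j, 0 <= p j) ->
   forall (sigma : {perm 'I_n}) (ts ps : 'I_n -> R),
     feasible_schedule p ts ps ->
     sidle_cost y0 (test_order p sigma) <= rho * schedule_cost p ps).
Proof.
move=> rho; have [rho_le rho_ge rho_root d2_gt0 lin_c] := ratio_bounds (root_bounds hy0 hroot).
rewrite -/rho in rho_le rho_ge rho_root d2_gt0 lin_c.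
split=> // n p p_ge0 sigma ts ps sched; set s := test_order p sigma.
have y0_gt0 : 0 < y0 by case/andP: hy0 => y0_gt1 _; lra.
have rho_gt1 : 1 < rho by lra.
have gap_ge0 : 0 <= gap rho (tag_long y0 s).
  apply: (gap_ge0_of_extreme y0_gt0 (ltW rho_gt1)) => [r ext_r|].
    by rewrite (gap_extreme rho y0_gt0 ext_r) extreme_gap_ge0 ?ler0n // ltW.
  by apply: admissible_tag_long; apply/allP => _ /mapP [k _ ->].
have := sidle_cost_le_ub y0 s; have := schedule_cost_ge_lb y0 sigma p_ge0 sched.
move: gap_ge0; rewrite /gap -/s; nra.
Qed.
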